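(* Any algorithm that maintains a uniformly random sample of the active elements within a timestamp-based sliding window has memory usage $\Omega(\log n)$, where $n$ is the number of active elements: there exist streams for which, with positive probability, at some time the algorithm must store $\Omega(\log n)$ distinct elements.
   Context: A stream $p_0,p_1,\dots$ has non-decreasing timestamps $T(p_i)$ (several elements may share a timestamp); with fixed parameter $t_0$, element $p$ is active at time $t$ if $t-T(p)<t_0$, otherwise expired. The sample at each time must be uniform over the active elements at that time. *)

From HB Require Import structures.
From mathcomp Require Import all_boot all_order all_algebra.
From mathcomp Require Import all_classical all_reals all_analysis.
Set Implicit Arguments. Unset Strict Implicit. Unset Printing Implicit Defensive.
Import Order.TTheory GRing.Theory Num.Theory.
Local Open Scope classical_set_scope.

(* A stream p_0, p_1, ..., p_(m-1) is represented by the sequence of its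
   timestamps T (element p_i is identified with its index i, timestamp
   nth 0 T i). *)

Definition stamp (T : seq nat) (i : nat) : nat := nth 0 T i.

Definition is_active (T : seq nat) (t0 t i : nat) : bool :=
  [&& i < size T, stamp T i <= t & t - stamp T i < t0].

Definition active_set (T : seq nat) (t0 t : nat) : seq nat :=
  [seq i <- iota 0 (size T) | is_active T t0 t i].

Definition arrivals (T : seq nat) (t : nat) : seq nat :=
  [seq i <- iota 0 (size T) | stamp T i == t].

(* A (randomized) sliding-window sampling algorithm run on stream T with
   window t0, with randomness from the probability space (Om, P):
   - M t w : the elements stored in memory at time t (after processing all
     elements with timestamp <= t);
   - s t w : the sample output at time t.
   Constraints:
   - memory: an element can only be in memory at time t if it was in memory
     at time t-1 or arrives at time t (the algorithm cannot recover dropped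
     elements);
   - the output sample is a stored element;
   - the sample is uniform over the active elements at every time t at which
     some element is active;
   - measurability of the events used. *)
Definition window_sampler (R : realType) (d : measure_display)
  (Om : measurableType d) (P : probability Om R) (T : seq nat) (t0 : nat)
  (M : nat -> Om -> seq nat) (s : nat -> Om -> nat) : Prop :=
  [/\ (forall t (A : seq nat), measurable [set w | M t w = A]) /\
      (forall t i, measurable [set w | s t w = i]),
      (forall w i, i \in M 0 w -> i \in arrivals T 0),
      (forall t w i, i \in M t.+1 w -> (i \in M t w) || (i \in arrivals T t.+1)),
      (forall t w, active_set T t0 t != [::] -> s t w \in M t w) &
      (forall t i, is_active T t0 t i ->
         P [set w | s t w = i] = (((size (active_set T t0 t))%:R)^-1)%R%:E)].

Definition mem_usage (M : nat -> seq nat) (t : nat) : nat := size (undup (M t)).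

(* Feed the stream whose element i has timestamp i into a window of length
   m + 1 and watch times m, m + 1, ..., 2m.  At time m + j the active
   elements are exactly j, ..., m, and nothing arrives after time m, so every
   element the algorithm outputs at a later time must already be in memory at
   time m.  Element j is the sample at time m + j with probability
   1 / (m + 1 - j), hence the expected number of indices j whose sample at
   time m + j is j equals the harmonic number H_(m+1) > ln (m + 1).  That
   number is bounded by the memory usage at time m, which therefore reaches
   ln (m + 1) with positive probability. *)

From HB Require Import structures.
From mathcomp Require Import all_boot all_order all_algebra.
From mathcomp Require Import all_classical all_reals all_analysis.
From mathcomp Require Import measurable_realfun zify.
Set Implicit Arguments. Unset Strict Implicit. Unset Printing Implicit Defensive.
Import Order.TTheory GRing.Theory Num.Theory.
Local Open Scope classical_set_scope.
Local Open Scope ring_scope.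

Lemma ln_le_harmonic_sum (R : realType) (n : nat) :
  ln (n.+1%:R : R) <= \sum_(j < n) harmonic j.
Proof.
elim: n => [|n IHn]; first by rewrite big_ord0 ln1.
rewrite big_ord_recr /= -addn1 natrD.
have -> : n.+1%:R + 1 = n.+1%:R * (1 + n.+1%:R^-1) :> R.
  by rewrite mulrDr mulr1 divff ?pnatr_eq0.
rewrite lnM ?posrE ?addr_gt0 ?invr_gt0 ?ltr0n //.
by rewrite lerD // le_ln1Dx // (lt_le_trans _ (harmonic_ge0 _)) ?ltrN10.
Qed.

Lemma ln_lt_harmonic_sum (R : realType) (n : nat) :
  ln (n.+1%:R : R) < \sum_(j < n.+1) harmonic j.
Proof.
by rewrite big_ord_recr /= (le_lt_trans (ln_le_harmonic_sum R n)) ?ltrDl ?harmonic_gt0.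
Qed.

Lemma sum_harmonic_rev (R : fieldType) (n : nat) :
  \sum_(j < n) ((n - j)%:R^-1 : R) = \sum_(j < n) harmonic j.
Proof.
rewrite (reindex_inj rev_ord_inj); apply: eq_bigr => j _ /=.
by rewrite /harmonic /= subKn.
Qed.

Lemma count_mem_le_size_undup (T : eqType) (s A : seq T) :
  uniq s -> (count (mem A) s <= size (undup A))%N.
Proof.
move=> s_uniq; rewrite -size_filter uniq_leq_size ?filter_uniq // => x.
by rewrite mem_filter mem_undup => /andP[].
Qed.

Lemma measurable_preimage_countType d (Om : measurableType d) (T : countType)
    (f : Om -> T) (A : set T) :
  (forall a, measurable [set w | f w = a]) -> measurable (f @^-1` A).
Proof.
move=> mf; have -> : f @^-1` A = \bigcup_(a : T) ([set w | f w = a] `&` [set _ | A a]).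
  by apply/seteqP; split => [w Afw | w [a _ [<-]]] //; exists (f w).
apply: countable_bigcupT_measurable; first exact: countableP.
move=> a; apply: measurableI => //.
have [Aa|nAa] := pselect (A a).
- by rewrite (_ : [set _ | A a] = setT) //; apply/seteqP; split.
- by rewrite (_ : [set _ | A a] = set0) //; apply/seteqP; split.
Qed.

Lemma sum_measure_le_ae d (T : measurableType d) (R : realType)
    (mu : {measure set T -> \bar R}) (I : Type) (r : seq I) (F : I -> set T) (K : R) :
  0 <= K -> (forall i, measurable (F i)) ->
  {ae mu, forall x, \sum_(i <- r) \1_(F i) x <= K} ->
  (\sum_(i <- r) mu (F i) <= K%:E * mu setT)%E.
Proof.
move=> K_ge0 mF aeK; rewrite -integral_cst //.
have mindic i : measurable_fun setT (EFin \o (\1_(F i) : T -> R)).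
  by apply/measurable_EFinP; exact: measurable_indic.
have -> : (\sum_(i <- r) mu (F i) = \int[mu]_x \sum_(i <- r) (\1_(F i) x : R)%:E)%E.
  rewrite ge0_integral_sum //; apply: eq_bigr => i _.
  by rewrite integral_indic // setIT.
apply: ae_ge0_le_integral.
- exact: measurableT.
- by move=> x _; apply: sume_ge0 => i _; rewrite lee_fin.
- exact: emeasurable_sum.
- by move=> x _; rewrite lee_fin.
- exact: measurable_cst.
- by apply: filterS aeK => x xK _; rewrite sumEFin lee_fin.
Qed.

Section iota_stream.
Local Open Scope nat_scope.

Lemma stamp_iota n i : i < n -> stamp (iota 0 n) i = i.
Proof. by move=> i_lt_n; rewrite /stamp nth_iota. Qed.

Lemma arrivals_iota n t : n <= t -> arrivals (iota 0 n) t = [::].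
Proof.
move=> n_le_t; rewrite /arrivals size_iota -(filter_pred0 (iota 0 n)).
apply: eq_in_filter => i; rewrite mem_iota => /andP[_ i_lt_n] /=.
by rewrite stamp_iota //; apply/eqP; lia.
Qed.

Lemma is_active_iota m j i : i <= m ->
  is_active (iota 0 m.+1) m.+1 (m + j) i = (j <= i).
Proof.
move=> i_le_m; rewrite /is_active size_iota stamp_iota // ltnS i_le_m /=.
by apply/andP/idP => [[_]|]; [lia | split; lia].
Qed.

Lemma filter_leq_iota n j : j <= n -> [seq i <- iota 0 n | j <= i] = iota j (n - j).
Proof.
move=> j_le_n; rewrite -[in LHS](subnKC j_le_n) iotaD filter_cat add0n.
rewrite (@eq_in_filter _ _ pred0) ?filter_pred0; last first.
  by move=> i; rewrite mem_iota => /andP[_ i_lt_j] /=; rewrite leqNgt i_lt_j.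
by rewrite (@eq_in_filter _ _ predT) ?filter_predT // => i; rewrite mem_iota => /andP[].
Qed.

Lemma active_set_iota m j : j <= m ->
  active_set (iota 0 m.+1) m.+1 (m + j) = iota j (m.+1 - j).
Proof.
move=> j_le_m; rewrite /active_set size_iota -filter_leq_iota ?leqW //.
by apply: eq_in_filter => i; rewrite mem_iota ltnS => /andP[_]; exact: is_active_iota.
Qed.

End iota_stream.

Section window_sampler_theory.
Local Open Scope nat_scope.
Variables (R : realType) (d : measure_display) (Om : measurableType d).
Variables (P : probability Om R) (T : seq nat) (t0 : nat).
Variables (M : nat -> Om -> seq nat) (s : nat -> Om -> nat).
Hypothesis sampler : window_sampler P T t0 M s.

Lemma measurable_memory t (A : set (seq nat)) : measurable (M t @^-1` A).
Proof. by case: sampler => -[mM _] *; exact: measurable_preimage_countType. Qed.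

Lemma measurable_sample t i : measurable [set w | s t w = i].
Proof. by case: sampler => -[_ ms] *. Qed.

Lemma memory_sub_no_arrivals t :
  (forall u, t < u -> arrivals T u = [::]) ->
  forall k w, {subset M (t + k) w <= M t w}.
Proof.
case: sampler => _ _ memS _ _ no_arrivals.
elim=> [|k IHk] w i; first by rewrite addn0.
rewrite addnS => /memS; rewrite no_arrivals ?orbF; first exact: IHk.
by rewrite ltnS leq_addr.
Qed.

End window_sampler_theory.

Section sliding_window_lower_bound.
Variables (R : realType) (d : measure_display) (Om : measurableType d).
Variables (P : probability Om R) (m : nat).
Variables (M : nat -> Om -> seq nat) (s : nat -> Om -> nat).
Hypothesis sampler : window_sampler P (iota 0 m.+1) m.+1 M s.

Lemma sample_iota_in_memory j w : (j <= m)%N -> s (m + j)%N w = j -> j \in M m w.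
Proof.
move=> j_le_m sample_j.
have active_ne0 : active_set (iota 0 m.+1) m.+1 (m + j) != [::].
  by rewrite active_set_iota // -size_eq0 size_iota subn_eq0 -ltnNge ltnS.
have j_mem : j \in M (m + j)%N w.
  by case: sampler => _ _ _ sample_mem _; rewrite -[X in X \in _]sample_j sample_mem.
exact: (memory_sub_no_arrivals sampler (@arrivals_iota m.+1) j_mem).
Qed.

Lemma probability_sample_iota j : (j <= m)%N ->
  P [set w | s (m + j)%N w = j] = ((m.+1 - j)%:R^-1)%:E.
Proof.
case: sampler => _ _ _ _ uniform j_le_m.
by rewrite uniform ?active_set_iota ?size_iota // is_active_iota.
Qed.

Lemma memory_usage_ge_ln :
  (0 < P [set w | (ln (m.+1%:R : R) <= (mem_usage (M ^~ w) m)%:R)%R])%E.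
Proof.
set G := [set w | _].
have mG : measurable G := measurable_memory sampler m
  [set A | ln m.+1%:R <= (size (undup A))%:R].
pose B (j : 'I_m.+1) := [set w | s (m + j)%N w = j].
have indicators_le_memory_usage w :
    \sum_(j < m.+1) \1_(B j) w <= (mem_usage (M ^~ w) m)%:R :> R.
  apply: (@le_trans _ _ (count (mem (M m w)) (iota 0 m.+1))%:R); last first.
    by rewrite ler_nat count_mem_le_size_undup ?iota_uniq.
  rewrite -sum1_count -[iota 0 m.+1]/(index_iota 0 m.+1) big_mkord natr_sum.
  rewrite [leRHS]big_mkcond; apply: ler_sum => j _.
  rewrite indicE; have [wBj|_] := boolP (w \in B j); last by case: ifP.
  by rewrite ifT //; exact: (sample_iota_in_memory (ltn_ord j) (set_mem wBj)).
rewrite lt0e measure_ge0 andbT; apply/eqP => PG0.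
have : (\sum_(j < m.+1) P (B j) <= (ln m.+1%:R)%:E * P setT)%E.
  apply: sum_measure_le_ae.
  - by rewrite ln_ge0 // ler1n.
  - by move=> j; exact: (measurable_sample sampler).
  - exists G; split => // w /= /negP; rewrite -ltNge => ln_lt.
    by rewrite /G /= ltW // (lt_le_trans ln_lt) ?indicators_le_memory_usage.
rewrite probability_setT mule1.
rewrite (eq_bigr (fun j : 'I_m.+1 => ((m.+1 - j)%:R^-1)%:E)) => [|j _]; last first.
  exact: (probability_sample_iota (ltn_ord j)).
by rewrite sumEFin lee_fin sum_harmonic_rev leNgt ln_lt_harmonic_sum.
Qed.

End sliding_window_lower_bound.

Theorem lemma4p7 (R : realType) :
  exists c : R, (0 < c)%R /\ exists n0 : nat, forall n : nat, (n0 <= n)%N ->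
  exists (T : seq nat) (t0 t : nat),
    sorted leq T /\ size (active_set T t0 t) = n /\
    forall (d : measure_display) (Om : measurableType d) (P : probability Om R)
      (M : nat -> Om -> seq nat) (s : nat -> Om -> nat),
      window_sampler P T t0 M s ->
      (0 < P [set w | (c * ln (n%:R) <= (mem_usage (M ^~ w) t)%:R)%R])%E.
Proof.
exists 1; split; first exact: ltr01.
exists 1%N => -[//|m] _; exists (iota 0 m.+1), m.+1, m.
split; first exact: iota_sorted.
split; first by rewrite -[m in active_set _ _ m]addn0 active_set_iota ?size_iota.
by move=> d Om P M s sampler; rewrite mul1r; exact: memory_usage_ge_ln sampler.
Qed.
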